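(* Let $G$ be a $\gamma_t$-critical graph of order $n$ with $\gamma_t(G)=n-\Delta(G)$ and $\delta(G)\ge 2$. Let $v$ be a vertex with $d(v)=\Delta(G)$, let $S=V(G)\setminus N[v]$, and let $H_1,\dots,H_t$ be the connected components of $G[S]$. Then: (1) each $H_i$ is isomorphic to $P_2$ or $P_3$; (2) if some $H_i$ is isomorphic to $P_3$, then $G[S]$ itself is a path $P_3=u_1u_2u_3$ (so $t=1$); moreover $N(u_2)\cap N(v)=\emptyset$, and $N(v)$ is the disjoint union of the two nonempty sets $N(u_1)\setminus\{u_2\}$ and $N(u_3)\setminus\{u_2\}$; (3) if every $H_i$ is isomorphic to $P_2$, say $H_i=u_iw_i$, then $N(u)\cap N(v)\neq\emptyset$ for every $u\in S$, and $N(v)$ is the disjoint union of the sets $N(u_1)\setminus\{w_1\},\,N(w_1)\setminus\{u_1\},\dots,N(u_t)\setminus\{w_t\},\,N(w_t)\setminus\{u_t\}$.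
   Context: All graphs are finite and simple. $N(x)$ is the neighborhood of $x$, $N[x]=N(x)\cup\{x\}$, $d(x)=|N(x)|$, $G[X]$ the subgraph induced by $X$, $P_k$ the path on $k$ vertices. A set $S\subseteq V(G)$ is a total dominating set if every vertex of $G$ is adjacent to some vertex of $S$; $\gamma_t(G)$ is the minimum size of such a set. A leaf is a vertex of degree one. A graph $G$ with no isolated vertex is $\gamma_t$-critical if for every vertex $v$ not adjacent to a leaf, $\gamma_t(G-v)<\gamma_t(G)$. *)

(* A simple graph is a symmetric irreflexive relation e on a finType T. *)
From mathcomp Require Import all_boot.
Set Implicit Arguments. Unset Strict Implicit. Unset Printing Implicit Defensive.

Section Graph.
Variables (T : finType) (e : rel T).

Definition nbhd (x : T) : {set T} := [set y | e x y].
Definition deg (x : T) : nat := #|nbhd x|.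

Definition maxdeg : nat := \max_(x : T) deg x.

Definition leaf (x : T) : bool := deg x == 1.

Definition tds_on (A S : {set T}) : bool :=
  (S \subset A) && [forall x in A, [exists y in S, e x y]].

(* total domination number of G[A]: minimum size of a TDS of G[A]
   (the default #|A| is only reached when G[A] has no TDS, i.e. has an
   isolated vertex; this never happens where the notion is used). *)
Definition gammat_on (A : {set T}) : nat :=
  \big[minn/#|A|]_(S : {set T} | tds_on A S) #|S|.

Definition gammat : nat := gammat_on [set: T].

Definition no_isolated : Prop := forall x : T, exists y, e x y.

Definition gt_critical : Prop :=
  no_isolated /\
  forall v : T, (forall u, e v u -> ~~ leaf u) ->
    gammat_on [set~ v] < gammat.

Definition ind_rel (S : {set T}) : rel T :=
  [rel x y | [&& e x y, x \in S & y \in S]].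
Definition gcomp (S : {set T}) (u : T) : {set T} :=
  [set y in S | connect (ind_rel S) u y].

Definition isP2 (C : {set T}) : Prop :=
  exists a b, [/\ a != b, C = [set a; b] & e a b].

Definition isP3_on (C : {set T}) (u1 u2 u3 : T) : Prop :=
  [/\ [&& u1 != u2, u2 != u3 & u1 != u3], C = [set u1; u2; u3],
      e u1 u2, e u2 u3 & ~~ e u1 u3].
Definition isP3 (C : {set T}) : Prop :=
  exists u1 u2 u3, isP3_on C u1 u2 u3.

End Graph.

(* Here gamma_t(G) = |S| + 1.  For w in N(v), the set {v, w} together with one
   neighbour of each vertex of S is total dominating, so any Z included in S
   that is dominated by w and a set Y satisfies |Z| <= |Y| + 1.  Hence every
   vertex of N(v) has at most one neighbour in S, and if G[S] contains a
   cherry t1 c t2 then every vertex of S adjacent to N(v) is t1 or t2.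
   Criticality puts a minimum total dominating set of G - v inside S, so every
   vertex other than v has a neighbour in S.  If some vertex of S has two
   neighbours in S, these facts force G[S] to be that single P_3 with its
   centre away from N(v); otherwise G[S] is a perfect matching, and minimum
   degree 2 sends the other neighbours of each matched vertex into N(v). *)

From HB Require Import structures.
From mathcomp Require Import all_boot.
From mathcomp Require Import zify.

Set Implicit Arguments. Unset Strict Implicit. Unset Printing Implicit Defensive.

HB.instance Definition _ := SemiGroup.isComLaw.Build nat minn minnA minnC.

Lemma bigmin_le (I : finType) (P : pred I) (F : I -> nat) x i :
  P i -> \big[minn/x]_(j | P j) F j <= F i.
Proof. by move=> Pi; rewrite (bigD1 i) //= geq_minl. Qed.

Lemma bigmin_attained (I : finType) (P : pred I) (F : I -> nat) x :
  \big[minn/x]_(j | P j) F j < x -> exists2 i, P i & \big[minn/x]_(j | P j) F j = F i.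
Proof.
apply: (big_rec (fun y => y < x -> exists2 i, P i & y = F i)); first by rewrite ltnn.
move=> i y Pi IH; rewrite /minn; case: (ltnP (F i) y) => _ lt_yx; first by exists i.
exact: IH.
Qed.

Section TotalDomination.
Variables (T : finType) (e : rel T).

Lemma gammat_on_le A D : tds_on e A D -> gammat_on e A <= #|D|.
Proof. exact: bigmin_le. Qed.

Lemma gammat_on_attained A :
  gammat_on e A < #|A| -> exists2 D, tds_on e A D & gammat_on e A = #|D|.
Proof. exact: bigmin_attained. Qed.

Lemma tds_onT (D : {set T}) : (forall x, exists2 y, y \in D & e x y) -> tds_on e setT D.
Proof.
move=> domD; rewrite /tds_on subsetT; apply/forall_inP => x _.
by have [y yD xy] := domD x; apply/exists_inP; exists y.
Qed.

End TotalDomination.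

Section Components.
Variables (T : finType) (e : rel T) (S : {set T}).

Lemma mem_gcomp_self u : u \in S -> u \in gcomp e S u.
Proof. by move=> uS; rewrite inE uS connect0. Qed.

Lemma mem_gcomp_adj u y z :
  y \in gcomp e S u -> z \in S -> e y z -> z \in gcomp e S u.
Proof.
rewrite !inE => /andP [yS uy] zS yz; rewrite zS (connect_trans uy) //.
by apply: connect1; rewrite /ind_rel /= yz yS zS.
Qed.

Lemma gcomp_sub u : gcomp e S u \subset S.
Proof. by apply/subsetP => y; rewrite inE => /andP []. Qed.

Lemma gcomp_min (A : {set T}) u :
  (forall x y, x \in A -> y \in S -> e x y -> y \in A) ->
  u \in A -> gcomp e S u \subset A.
Proof.
move=> closedA uA; apply/subsetP => y; rewrite inE => /andP [_ /connectP [p pth ->]].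
elim: p u uA pth => //= x p IH u uA /andP [/and3P [ux _ xS] pth].
exact: IH (closedA u x uA xS ux) pth.
Qed.

Lemma branching_or_unique_nbr :
  (exists s a b, [/\ s \in S, a \in S, b \in S, a != b & e s a && e s b]) \/
  (forall s y1 y2, s \in S -> y1 \in S -> y2 \in S -> e s y1 -> e s y2 -> y1 = y2).
Proof.
case: (boolP [exists s, exists a, exists b,
   [&& s \in S, a \in S, b \in S, a != b & e s a && e s b]]).
  by move=> /existsP [s /existsP [a /existsP [b /and5P [? ? ? ? ?]]]]; left; exists s, a, b.
move=> none; right => s y1 y2 sS y1S y2S sy1 sy2; apply/eqP/negPn/negP => y12.
move: none => /existsPn /(_ s) /existsPn /(_ y1) /existsPn /(_ y2).
by rewrite sS y1S y2S y12 sy1 sy2.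
Qed.

End Components.

Arguments mem_gcomp_self {T e S u}.

Lemma card_isP2 (T : finType) (e : rel T) (C : {set T}) : isP2 e C -> #|C| = 2.
Proof. by move=> [a [b [ab -> _]]]; rewrite cards2 ab. Qed.

Lemma cards3 (T : finType) (a b c : T) :
  a != b -> b != c -> a != c -> #|[set a; b; c]| = 3.
Proof. by move=> ab bc ac; rewrite -setUA cardsU1 cards2 !inE negb_or ab ac bc. Qed.

Lemma card_isP3_on (T : finType) (e : rel T) (C : {set T}) u1 u2 u3 :
  isP3_on e C u1 u2 u3 -> #|C| = 3.
Proof. by move=> [/and3P [u12 u23 u13] -> _ _ _]; apply: cards3. Qed.

Section OutsideClosedNeighbourhood.
Variables (T : finType) (e : rel T).
Hypotheses (esym : symmetric e) (eirr : irreflexive e).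
Variable v : T.

Local Notation S := (~: (v |: nbhd e v)).

Lemma in_outside x : (x \in S) = (x != v) && ~~ e v x.
Proof. by rewrite !inE negb_or. Qed.

Lemma outside_neq_v u : u \in S -> u != v.
Proof. by rewrite in_outside => /andP []. Qed.

Lemma card_outside : #|S| + (deg e v).+1 = #|T|.
Proof. by rewrite -(cardsC (v |: nbhd e v)) cardsU1 inE eirr addnC. Qed.

Lemma nbhd_v_of_outside_nbr u x : u \in S -> e u x -> x \notin S -> e v x.
Proof.
rewrite !inE ?negbK negb_or => /andP [_ vu] ux /orP [/eqP xv|] //.
by move: vu; rewrite -xv esym ux.
Qed.

Hypothesis noiso : no_isolated e.
Hypothesis gammatE : gammat e = #|S|.+1.

Lemma outside_lt_tds D : tds_on e setT D -> #|S| < #|D|.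
Proof. by rewrite -ltnS -gammatE; apply: gammat_on_le. Qed.

(* [{v, w} :|: Y :|: f @: (S :\: Z)] is total dominating, for any choice [f] of
   neighbours, whence [#|S| + 1 <= #|Y| + (#|S| - #|Z|) + 2]. *)
Lemma card_dominated_le w (Z Y : {set T}) :
  e v w -> Z \subset S ->
  (forall s, s \in Z -> e s w \/ exists2 y, y \in Y & e s y) -> #|Z| <= #|Y|.+1.
Proof.
move=> vw ZS domZ.
pose f s := odflt s [pick y | e s y].
have sf s : e s (f s).
  by rewrite /f; case: pickP => [//|none]; have [y sy] := noiso s; move: (none y); rewrite sy.
pose D := [set v; w] :|: (Y :|: f @: (S :\: Z)).
have : tds_on e setT D.
  apply: tds_onT => x; case: (eqVneq x v) => [->|xv].
    by exists w; rewrite // !inE eqxx orbT.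
  case: (boolP (e v x)) => vx; first by exists v; rewrite ?inE ?eqxx // esym.
  case: (boolP (x \in Z)) => [/domZ [xw|[y yY xy]]|xZ].
  - by exists w; rewrite // !inE eqxx orbT.
  - by exists y; rewrite // !inE yY !orbT.
  - by exists (f x); rewrite // !inE imset_f ?orbT // !inE xZ negb_or xv.
move/outside_lt_tds.
have := (leq_card_setU [set v; w] (Y :|: f @: (S :\: Z))).1.
have := (leq_card_setU Y (f @: (S :\: Z))).1.
have := leq_imset_card f (S :\: Z).
have : #|[set v; w]| <= 2 by rewrite cards2; case: (_ != _).
have := cardsD S Z; rewrite (setIidPr ZS).
have := subset_leq_card ZS.
rewrite /D; lia.
Qed.

Lemma nbhd_v_outside_nbr_unique w p q :
  e v w -> p \in S -> q \in S -> e w p -> e w q -> p = q.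
Proof.
move=> vw pS qS wp wq; apply/eqP/negPn/negP => pq.
have : #|[set p; q]| <= #|@set0 T|.+1.
  apply: (card_dominated_le vw); first by rewrite subUset !sub1set pS qS.
  by move=> s; rewrite !inE => /orP [] /eqP ->; left; rewrite esym.
by rewrite cards2 pq cards0.
Qed.

Lemma attached_cherry_end t1 t2 c p w :
  t1 \in S -> t2 \in S -> c \in S -> t1 != t2 -> e t1 c -> e t2 c ->
  p \in S -> e v w -> e w p -> (p == t1) || (p == t2).
Proof.
move=> t1S t2S cS t12 t1c t2c pS vw wp; apply/negPn/negP; rewrite negb_or => /andP [pt1 pt2].
have : #|[set p; t1; t2]| <= #|[set c]|.+1.
  apply: (card_dominated_le vw); first by rewrite !subUset !sub1set pS t1S t2S.
  move=> s; rewrite !inE -orbA => /or3P [] /eqP ->; first by left; rewrite esym.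
    by right; exists c; rewrite ?inE.
  by right; exists c; rewrite ?inE.
by rewrite cards3 // cards1.
Qed.

Hypothesis crit : gt_critical e.
Hypothesis mindeg : forall x : T, 2 <= deg e x.

Lemma exists_other_nbr u y : exists2 x, e u x & x != y.
Proof.
have : 0 < #|nbhd e u :\ y|.
  have := cardsD1 y (nbhd e u); have := mindeg u; have := leq_b1 (y \in nbhd e u).
  by rewrite /deg; lia.
by rewrite card_gt0 => /set0Pn [x]; rewrite !inE => /andP [xy ux]; exists x.
Qed.

(* A minimum total dominating set of [G - v] avoids [N(v)], since otherwise it
   would dominate [G] too; hence it lies in [S]. *)
Lemma exists_outside_nbr x : x != v -> exists2 y, y \in S & e x y.
Proof.
have lt_gt : gammat_on e [set~ v] < gammat e.
  apply: crit.2 => u _; rewrite /leaf; apply/negP => /eqP deg1.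
  by have := mindeg u; rewrite deg1.
have [D /andP [Dsub /forall_inP domD] gtD] :
    exists2 D, tds_on e [set~ v] D & gammat_on e [set~ v] = #|D|.
  apply: gammat_on_attained; apply: leq_trans lt_gt _.
  by rewrite gammatE cardsC1; have := card_outside; have := mindeg v; lia.
have DS : D \subset S.
  apply/subsetP => y yD; rewrite in_outside; move/subsetP/(_ y yD): Dsub; rewrite !inE => -> /=.
  apply/negP => vy; have : tds_on e setT D.
    apply: tds_onT => z; case: (eqVneq z v) => [->|zv]; first by exists y.
    by apply/exists_inP; apply: domD; rewrite !inE.
  by move/outside_lt_tds; rewrite -gtD; move: lt_gt; rewrite gammatE; lia.
move=> xv; have /exists_inP [y yD xy] : [exists y in D, e x y] by apply: domD; rewrite !inE.
by exists y; rewrite ?(subsetP DS).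
Qed.

Lemma exists_attached : exists p w, [/\ p \in S, e v w & e w p].
Proof.
have : 0 < deg e v by apply: leq_trans (mindeg v).
rewrite card_gt0 => /set0Pn [w]; rewrite inE => vw.
have wv : w != v by apply: contraTneq vw => ->; rewrite eirr.
by have [p pS wp] := exists_outside_nbr wv; exists p, w.
Qed.

Section Cherry.
Variables s a b : T.
Hypotheses (sS : s \in S) (aS : a \in S) (bS : b \in S) (ab : a != b)
  (sa : e s a) (sb : e s b).

Let as_ : a != s. Proof. by apply: contraTneq sa => ->; rewrite eirr. Qed.
Let bs : b != s. Proof. by apply: contraTneq sb => ->; rewrite eirr. Qed.

Let attached_end p w : p \in S -> e v w -> e w p -> (p == a) || (p == b).
Proof.
by move=> pS vw wp; apply: (attached_cherry_end aS bS sS ab _ _ pS vw wp); rewrite esym.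
Qed.

Lemma cherry_ends_nonadjacent : ~~ e a b.
Proof.
have [p [w [pS vw wp]]] := exists_attached.
apply/negP => eab.
have := attached_cherry_end sS bS aS _ sa _ pS vw wp.
have := attached_cherry_end sS aS bS _ sb eab pS vw wp.
rewrite (eq_sym s a) as_ (eq_sym s b) bs esym eab => /(_ isT) p_sa /(_ isT isT) p_sb.
case/orP: (attached_end pS vw wp) p_sa p_sb => /eqP ->.
  by rewrite (negbTE as_) (negbTE ab).
by rewrite (negbTE bs) eq_sym (negbTE ab).
Qed.

Lemma cherry_spans_outside : S = [set a; s; b].
Proof.
apply/setP => z; apply/idP/idP; last first.
  by move: aS sS bS; rewrite !inE -orbA => ? ? ? /or3P [] /eqP ->.
move=> zS; apply/negPn/negP; rewrite !inE !negb_or => /andP [/andP [za zs] zb].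
have [p [w [pS vw wp]]] := exists_attached.
have nbrS x : e z x -> x \in S.
  move=> zx; apply/negPn/negP => xS.
  have := attached_end zS (nbhd_v_of_outside_nbr zS zx xS).
  by rewrite esym zx (negbTE za) (negbTE zb) => /(_ isT).
have [z1 zz1] := noiso z; have [z2 zz2 z21] := exists_other_nbr z z1.
have zp : e z p.
  have := attached_cherry_end (nbrS _ zz1) (nbrS _ zz2) zS _ _ _ pS vw wp.
  rewrite eq_sym z21 !(esym _ z) zz1 zz2 => /(_ isT isT isT).
  by case/orP => /eqP ->.
have sp : e s p by case/orP: (attached_end pS vw wp) => /eqP ->.
have := attached_cherry_end zS sS pS zs zp sp pS vw wp.
case/orP: (attached_end pS vw wp) => /eqP ->.
  by rewrite (eq_sym a z) (negbTE za) (negbTE as_).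
by rewrite (eq_sym b z) (negbTE zb) (negbTE bs).
Qed.

Lemma cherry_isP3 : isP3_on e S a s b.
Proof.
split; [by rewrite as_ eq_sym bs ab | exact: cherry_spans_outside | by rewrite esym | by [] |].
exact: cherry_ends_nonadjacent.
Qed.

Lemma cherry_centre_unattached : nbhd e s :&: nbhd e v = set0.
Proof.
apply/setP => x; rewrite !inE; apply/negP => /andP [sx vx].
have := attached_end sS vx; rewrite esym sx => /(_ isT).
by rewrite (eq_sym s a) (negbTE as_) (eq_sym s b) (negbTE bs).
Qed.

Let end_nbr_in_nbhd_v t x : t \in [set a; b] -> e t x -> x != s -> e v x.
Proof.
move=> tab tx xs.
have tS : t \in S by case/set2P: tab => ->.
apply: (nbhd_v_of_outside_nbr tS tx); rewrite cherry_spans_outside !inE (negbTE xs) orbF.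
apply/negP => /orP [] /eqP xE; move: tx; rewrite xE; case/set2P: tab => ->;
  by rewrite ?eirr ?(negbTE cherry_ends_nonadjacent) // esym (negbTE cherry_ends_nonadjacent).
Qed.

Lemma cherry_nbhd_v_split : nbhd e v = (nbhd e a :\ s) :|: (nbhd e b :\ s).
Proof.
apply/setP => x; rewrite !inE; apply/idP/idP => [vx|]; last first.
  by case/orP => /andP [xs tx]; apply: (end_nbr_in_nbhd_v _ tx xs); rewrite !inE eqxx ?orbT.
have xs : x != s by apply: contraTneq vx => ->; move: sS; rewrite in_outside => /andP [].
have xv : x != v by apply: contraTneq vx => ->; rewrite eirr.
have [y yS xy] := exists_outside_nbr xv.
move: yS; rewrite cherry_spans_outside !inE -orbA xs /= => /or3P [] /eqP yE.
all: move: xy; rewrite yE esym.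
- by move=> ->.
- by move=> sx; move/setP/(_ x): cherry_centre_unattached; rewrite !inE sx vx.
- by move=> ->; rewrite orbT.
Qed.

Lemma cherry_end_nbhds_disjoint : [disjoint nbhd e a :\ s & nbhd e b :\ s].
Proof.
rewrite -setI_eq0; apply/eqP/setP => x; rewrite !inE.
apply/negP => /andP [/andP [xs ax] /andP [_ bx]]; move/negP: ab; apply.
have vx := end_nbr_in_nbhd_v (set21 a b) ax xs.
by apply/eqP; apply: (nbhd_v_outside_nbr_unique vx aS bS); rewrite esym.
Qed.

Lemma cherry_end_nbhds_nonempty : (nbhd e a :\ s != set0) && (nbhd e b :\ s != set0).
Proof.
have [x ax xs] := exists_other_nbr a s; have [y bY ys] := exists_other_nbr b s.
by apply/andP; split; apply/set0Pn; [exists x | exists y]; rewrite !inE ?xs ?ys.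
Qed.

Lemma gcomp_cherry u : u \in S -> gcomp e S u = S.
Proof.
move=> uS; apply/eqP; rewrite eqEsubset gcomp_sub /=.
have su : s \in gcomp e S u.
  have uE := uS; rewrite cherry_spans_outside !inE -orbA in uE.
  case/or3P: uE => /eqP ->.
  - by apply: (mem_gcomp_adj (mem_gcomp_self aS) sS); rewrite esym.
  - exact: mem_gcomp_self.
  - by apply: (mem_gcomp_adj (mem_gcomp_self bS) sS); rewrite esym.
apply/subsetP => y yS; rewrite cherry_spans_outside !inE -orbA in yS.
case/or3P: yS => /eqP ->.
- exact: mem_gcomp_adj su aS sa.
- exact: su.
- exact: mem_gcomp_adj su bS sb.
Qed.

Lemma cherry_outside :
  [/\ forall u, u \in S -> isP3 e (gcomp e S u),
      forall u, u \in S -> ~ isP2 e (gcomp e S u) &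
      exists u1 u2 u3,
       [/\ isP3_on e S u1 u2 u3,
           nbhd e u2 :&: nbhd e v = set0,
           nbhd e v = (nbhd e u1 :\ u2) :|: (nbhd e u3 :\ u2),
           [disjoint (nbhd e u1 :\ u2) & (nbhd e u3 :\ u2)] &
           (nbhd e u1 :\ u2 != set0) && (nbhd e u3 :\ u2 != set0)]].
Proof.
split=> [u uS | u uS /card_isP2 | ]; rewrite ?gcomp_cherry //.
- by exists a, s, b; apply: cherry_isP3.
- by rewrite (card_isP3_on cherry_isP3).
exists a, s, b; split.
- exact: cherry_isP3.
- exact: cherry_centre_unattached.
- exact: cherry_nbhd_v_split.
- exact: cherry_end_nbhds_disjoint.
- exact: cherry_end_nbhds_nonempty.
Qed.

End Cherry.

Section Matching.
Hypothesis uniq_nbr : forall s y1 y2,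
  s \in S -> y1 \in S -> y2 \in S -> e s y1 -> e s y2 -> y1 = y2.

Lemma isP2_gcomp_matching u : u \in S -> isP2 e (gcomp e S u).
Proof.
move=> uS; have [w wS uw] := exists_outside_nbr (outside_neq_v uS).
exists u, w; split => //; first by apply: contraTneq uw => ->; rewrite eirr.
apply/eqP; rewrite eqEsubset; apply/andP; split.
  apply: gcomp_min; last by rewrite !inE eqxx.
  move=> x y /set2P [] -> yS xy; rewrite !inE; apply/orP.
    by right; rewrite (uniq_nbr uS yS wS xy uw).
  by left; rewrite (uniq_nbr wS yS uS xy) // esym.
by rewrite subUset !sub1set mem_gcomp_self // (mem_gcomp_adj (mem_gcomp_self uS)).
Qed.

Lemma matching_nbr_in_nbhd_v u w x :
  u \in S -> w \in S -> e u w -> e u x -> x != w -> e v x.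
Proof.
move=> uS wS uw ux xw; apply: (nbhd_v_of_outside_nbr uS ux).
by apply: contra xw => xS; rewrite (uniq_nbr uS xS wS ux uw).
Qed.

Lemma matching_nbhd_meets u : u \in S -> nbhd e u :&: nbhd e v != set0.
Proof.
move=> uS; have [w wS uw] := exists_outside_nbr (outside_neq_v uS).
have [x ux xw] := exists_other_nbr u w.
by apply/set0Pn; exists x; rewrite !inE ux (matching_nbr_in_nbhd_v uS wS uw ux xw).
Qed.

Lemma matching_nbhd_v_cover x :
  x \in nbhd e v <-> exists u w, [/\ u \in S, w \in S, e u w & x \in nbhd e u :\ w].
Proof.
split; last first.
  move=> [u [w [uS wS uw]]]; rewrite !inE => /andP [xw ux].
  exact: matching_nbr_in_nbhd_v ux xw.
rewrite inE => vx.
have xv : x != v by apply: contraTneq vx => ->; rewrite eirr.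
have [u uS xu] := exists_outside_nbr xv.
have [w wS uw] := exists_outside_nbr (outside_neq_v uS).
exists u, w; split => //; rewrite !inE esym xu andbT.
by apply: contraTneq vx => ->; move: wS; rewrite in_outside => /andP [].
Qed.

Lemma matching_nbhds_disjoint u w u' w' x :
  u \in S -> w \in S -> e u w -> u' \in S -> w' \in S -> e u' w' ->
  x \in nbhd e u :\ w -> x \in nbhd e u' :\ w' -> u = u'.
Proof.
move=> uS wS uw u'S w'S u'w'; rewrite !inE => /andP [xw ux] /andP [_ u'x].
have vx := matching_nbr_in_nbhd_v uS wS uw ux xw.
by apply: (nbhd_v_outside_nbr_unique vx); rewrite // esym.
Qed.

End Matching.

End OutsideClosedNeighbourhood.

Theorem mainTheorem4 (T : finType) (e : rel T)
  (esym : symmetric e) (eirr : irreflexive e)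
  (Hcrit : gt_critical e)
  (Hgt : gammat e = #|T| - maxdeg e)
  (Hmindeg : forall x : T, 2 <= deg e x)
  (v : T) (Hv : deg e v = maxdeg e) :
  let S := ~: (v |: nbhd e v) in
  (forall u, u \in S -> isP2 e (gcomp e S u) \/ isP3 e (gcomp e S u)) /\
  ((exists u, u \in S /\ isP3 e (gcomp e S u)) ->
     exists u1 u2 u3,
       [/\ isP3_on e S u1 u2 u3,
           nbhd e u2 :&: nbhd e v = set0,
           nbhd e v = (nbhd e u1 :\ u2) :|: (nbhd e u3 :\ u2),
           [disjoint (nbhd e u1 :\ u2) & (nbhd e u3 :\ u2)] &
           (nbhd e u1 :\ u2 != set0) && (nbhd e u3 :\ u2 != set0)]) /\
  ((forall u, u \in S -> isP2 e (gcomp e S u)) ->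
     (forall u, u \in S -> nbhd e u :&: nbhd e v != set0) /\
     (forall x, x \in nbhd e v <->
        exists u w, [/\ u \in S, w \in S, e u w & x \in nbhd e u :\ w]) /\
     (forall u w u' w' x,
        u \in S -> w \in S -> e u w -> u' \in S -> w' \in S -> e u' w' ->
        x \in nbhd e u :\ w -> x \in nbhd e u' :\ w' -> u = u')).
Proof.
move=> S.
have gammatE : gammat e = #|S|.+1.
  by have := card_outside eirr v; rewrite /S Hgt -Hv; lia.
have noiso := Hcrit.1.
case: (branching_or_unique_nbr e S) => [[s [a [b [sS aS bS ab /andP [sa sb]]]]] | uniq_nbr].
  have [P3 notP2 cherry] :=
    cherry_outside esym eirr noiso gammatE Hcrit Hmindeg sS aS bS ab sa sb.
  split; [by move=> u /P3; right | split => // allP2].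
  by case: (notP2 s sS (allP2 s sS)).
have P2 := isP2_gcomp_matching esym eirr gammatE Hcrit Hmindeg uniq_nbr.
split; [by move=> u /P2; left | split].
  by move=> [u [uS [u1 [u2 [u3 /card_isP3_on]]]]]; rewrite (card_isP2 (P2 u uS)).
move=> _; split; [|split].
- exact (matching_nbhd_meets esym eirr gammatE Hcrit Hmindeg uniq_nbr).
- exact (matching_nbhd_v_cover esym eirr gammatE Hcrit Hmindeg uniq_nbr).
- exact (matching_nbhds_disjoint esym noiso gammatE uniq_nbr).
Qed.
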